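(* Let $X$ be an exponential vector space over a field $K$. Then $X\smallsetminus X_0$ has a basis if and only if the feasible set $Q(X)$ generates $X\smallsetminus X_0$.
   Context: An exponential vector space (evs) over a field $K$ is a partially ordered set $(X,\leq)$ with a binary operation $+$ on $X$ and a map $K\times X\to X$, $(\alpha,x)\mapsto \alpha x$, such that: (A1) $(X,+)$ is a commutative semigroup with identity $\theta$; (A2) $x\leq y$ implies $x+z\leq y+z$ and $\alpha x\leq \alpha y$ for all $z\in X$, $\alpha\in K$; (A3) $\alpha(x+y)=\alpha x+\alpha y$, $\alpha(\beta x)=(\alpha\beta)x$, $(\alpha+\beta)x\leq \alpha x+\beta x$, $1x=x$; (A4) $\alpha x=\theta$ iff $\alpha=0$ or $x=\theta$; (A5) $x+(-1)x=\theta$ iff $x\in X_0$, where $X_0:=\{z\in X: y\not\leq z \text{ for all } y\in X\smallsetminus\{z\}\}$ (the set of minimal elements, called the primitive space; it is a vector space over $K$); (A6) for each $x\in X$ there is $p\in X_0$ with $p\leq x$. For $x\in X\smallsetminus X_0$ let $L(x):=\{z\in X: z\geq \alpha x+p \text{ for some } \alpha\in K\smallsetminus\{0\},\ p\in X_0\}$. A subset $B\subseteq X\smallsetminus X_0$ generates $X\smallsetminus X_0$ if $X\smallsetminus X_0=\bigcup_{b\in B}L(b)$. Elements $x,y\in X\smallsetminus X_0$ are orderly dependent if $x\in L(y)$ or $y\in L(x)$, and orderly independent otherwise; $B\subseteq X\smallsetminus X_0$ is orderly independent if any two distinct members of $B$ are orderly independent. A basis of $X\smallsetminus X_0$ is an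 orderly independent subset of $X\smallsetminus X_0$ that generates $X\smallsetminus X_0$. For $x\in X$ write $\downarrow x:=\{z\in X: z\leq x\}$. The feasible set is $Q(X):=\{x\in X\smallsetminus X_0: (\downarrow x\smallsetminus X_0)\subseteq L(x)\}$. *)

From mathcomp Require Import all_boot all_algebra.
Set Implicit Arguments. Unset Strict Implicit. Unset Printing Implicit Defensive.
Local Open Scope ring_scope.

Section EVS.
Variables (K : fieldType) (X : Type).
Variables (le : X -> X -> Prop) (add : X -> X -> X) (smul : K -> X -> X) (th : X).

(* primitive space X_0: minimal elements *)
Definition prim (z : X) : Prop := forall y : X, y <> z -> ~ le y z.

Record is_evs : Prop := {
  evs_refl : forall x, le x x;
  evs_antisym : forall x y, le x y -> le y x -> x = y;
  evs_trans : forall x y z, le x y -> le y z -> le x z;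
  evs_addA : forall x y z, add x (add y z) = add (add x y) z;
  evs_addC : forall x y, add x y = add y x;
  evs_add0 : forall x, add x th = x;
  evs_le_add : forall x y z, le x y -> le (add x z) (add y z);
  evs_le_smul : forall x y (a : K), le x y -> le (smul a x) (smul a y);
  evs_smulD : forall (a : K) x y, smul a (add x y) = add (smul a x) (smul a y);
  evs_smulA : forall (a b : K) x, smul a (smul b x) = smul (a * b) x;
  evs_smulDl : forall (a b : K) x, le (smul (a + b) x) (add (smul a x) (smul b x));
  evs_smul1 : forall x, smul 1 x = x;
  evs_smul_eq0 : forall (a : K) x, smul a x = th <-> (a = 0 \/ x = th);
  evs_inv : forall x, add x (smul (-1) x) = th <-> prim x;
  evs_below : forall x, exists p, prim p /\ le p x
}.

Definition Lset (x : X) : X -> Prop :=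
  fun z => exists (a : K) (p : X), a <> 0 /\ prim p /\ le (add (smul a x) p) z.

Definition generates (B : X -> Prop) : Prop :=
  (forall b, B b -> ~ prim b) /\
  (forall z, ~ prim z <-> exists b, B b /\ Lset b z).

Definition orderly_dependent (x y : X) : Prop := Lset y x \/ Lset x y.

Definition orderly_independent_set (B : X -> Prop) : Prop :=
  forall x y, B x -> B y -> x <> y -> ~ orderly_dependent x y.

Definition is_basis (B : X -> Prop) : Prop :=
  (forall b, B b -> ~ prim b) /\ orderly_independent_set B /\ generates B.

Definition feasible : X -> Prop :=
  fun x => ~ prim x /\ (forall z, le z x -> ~ prim z -> Lset x z).

End EVS.

From mathcomp Require Import all_boot all_algebra.
From Stdlib Require Import ClassicalEpsilon FunctionalExtensionality PropExtensionality Classical.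

(* A basis element b is feasible: a non-primitive z <= b lies in some L(b')
   with b' in the basis, hence so does b, and independence forces b' = b.
   Conversely, on Q(X) orderly dependence is an equivalence relation: if
   y >= a x + p with y feasible, then a x + p is a non-primitive element
   below y, so it lies in L(y); dividing by a and cancelling the primitive
   a^-1 p puts x in L(y).  One representative from each class is a basis. *)

Set Implicit Arguments. Unset Strict Implicit. Unset Printing Implicit Defensive.
Import GRing.Theory.
Local Open Scope ring_scope.

Section Transversal.
Variables (T : Type) (S : T -> Prop) (E : T -> T -> Prop).
Hypotheses (inhT : inhabited T) (E_refl : forall x, S x -> E x x)
  (E_sym : forall x y, E x y -> E y x)
  (E_trans : forall x y z, S x -> S y -> S z -> E x y -> E y z -> E x z).

Let rep x := epsilon inhT (fun y => S y /\ E x y).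

Let repP x : S x -> S (rep x) /\ E x (rep x).
Proof.
move=> Sx; apply: (epsilon_spec inhT (fun y => S y /\ E x y)).
by exists x; split; last exact: E_refl.
Qed.

Let rep_eq x y : S x -> S y -> E x y -> rep x = rep y.
Proof.
move=> Sx Sy Exy; rewrite /rep; congr (epsilon _ _).
apply: functional_extensionality => z; apply: propositional_extensionality.
split=> -[Sz Ez]; split=> //.
- exact: E_trans Sy Sx Sz (E_sym Exy) Ez.
- exact: E_trans Sx Sy Sz Exy Ez.
Qed.

Lemma exists_transversal : exists R : T -> Prop,
  [/\ forall r, R r -> S r,
      forall x, S x -> exists2 r, R r & E r x
    & forall r r', R r -> R r' -> E r r' -> r = r'].
Proof.
exists (fun r => exists2 x, S x & r = rep x); split.
- by move=> _ [x Sx ->]; case: (repP Sx).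
- move=> x Sx; exists (rep x); first by exists x.
  by apply: E_sym; case: (repP Sx).
- move=> _ _ [x Sx ->] [y Sy ->] Er; apply: rep_eq => //.
  have [Srx Exrx] := repP Sx; have [Sry Eyry] := repP Sy.
  exact: E_trans Sx Srx Sy Exrx (E_trans Srx Sry Sy Er (E_sym Eyry)).
Qed.

End Transversal.

Section ExponentialVectorSpace.
Variables (K : fieldType) (X : Type) (le : X -> X -> Prop).
Variables (add : X -> X -> X) (smul : K -> X -> X) (th : X).
Hypothesis evs : is_evs le add smul th.

Lemma smul_th a : smul a th = th.
Proof. by apply/(evs_smul_eq0 evs); right. Qed.

Lemma prim_th : prim le th.
Proof. by apply/(evs_inv evs); rewrite smul_th (evs_add0 evs). Qed.

Lemma primD p q : prim le p -> prim le q -> prim le (add p q).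
Proof.
move=> /(evs_inv evs) Hp /(evs_inv evs) Hq; apply/(evs_inv evs).
rewrite (evs_smulD evs) (evs_addA evs) -(evs_addA evs p) (evs_addC evs q).
by rewrite (evs_addA evs) Hp -(evs_addA evs) Hq (evs_add0 evs).
Qed.

Lemma primZ a p : prim le p -> prim le (smul a p).
Proof.
move=> /(evs_inv evs) Hp; apply/(evs_inv evs).
by rewrite (evs_smulA evs) mulrC -(evs_smulA evs) -(evs_smulD evs) Hp smul_th.
Qed.

Lemma primZ_iff a x : a != 0 -> prim le (smul a x) <-> prim le x.
Proof.
move=> a0; split=> [pax|]; last exact: primZ.
have -> : x = smul a^-1 (smul a x) by rewrite (evs_smulA evs) mulVf // (evs_smul1 evs).
exact: primZ.
Qed.

Lemma addprimK x p : prim le p -> add (add x p) (smul (-1) p) = x.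
Proof. by move=> /(evs_inv evs) Hp; rewrite -(evs_addA evs) Hp (evs_add0 evs). Qed.

Lemma prim_affine a x p :
  a != 0 -> prim le p -> prim le (add (smul a x) p) -> prim le x.
Proof.
move=> a0 pp pw; apply/(primZ_iff _ a0).
by rewrite -(addprimK (smul a x) pp); apply: primD => //; apply: primZ.
Qed.

Lemma Lset_refl x : Lset le add smul x x.
Proof.
exists 1, th; split; first exact/eqP/oner_neq0.
split; first exact: prim_th.
by rewrite (evs_smul1 evs) (evs_add0 evs); apply: (evs_refl evs).
Qed.

Lemma Lset_trans x y z :
  Lset le add smul x y -> Lset le add smul y z -> Lset le add smul x z.
Proof.
move=> [a [p [/eqP a0 [pp le_axp]]]] [b [q [/eqP b0 [pq le_byq]]]].
exists (b * a), (add (smul b p) q); split; first exact/eqP/mulf_neq0.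
split; first by apply: primD => //; apply: primZ.
apply: evs_trans evs _ _ _ _ le_byq.
rewrite (evs_addA evs) -(evs_smulA evs) -(evs_smulD evs).
by apply: (evs_le_add evs); apply: (evs_le_smul evs).
Qed.

Lemma Lset_le x y z : Lset le add smul x y -> le y z -> Lset le add smul x z.
Proof.
move=> [a [p [a0 [pp le_axp]]]] le_yz; exists a, p; do 2!split=> //.
exact: (evs_trans evs) le_axp le_yz.
Qed.

Lemma Lset_nonprim x z : ~ prim le x -> Lset le add smul x z -> ~ prim le z.
Proof.
move=> nx [a [p [/eqP a0 [pp le_wz]]]] pz; apply/nx/(prim_affine a0 pp).
have -> : add (smul a x) p = z by apply: NNPP => ne; exact: pz _ ne le_wz.
exact: pz.
Qed.

Lemma Lset_feasible_sym x y : feasible le add smul y -> ~ prim le x ->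
  Lset le add smul x y -> Lset le add smul y x.
Proof.
move=> [_ fy] nx [a [p [/eqP a0 [pp le_wy]]]].
have nw : ~ prim le (add (smul a x) p) by move/(prim_affine a0 pp).
have [b [q [/eqP b0 [pq le_byq]]]] := fy _ le_wy nw.
pose p' := smul a^-1 p; have pp' : prim le p' by apply: primZ.
exists (a^-1 * b), (add (smul a^-1 q) (smul (-1) p')).
split; first by apply/eqP; rewrite mulf_neq0 ?invr_eq0.
split; first by apply: primD; apply: primZ => //; apply: primZ.
have := evs_le_add evs (smul (-1) p') (evs_le_smul evs a^-1 le_byq).
rewrite !(evs_smulD evs) (evs_smulA evs a^-1 b) (evs_smulA evs a^-1 a).
rewrite mulVf // (evs_smul1 evs) addprimK //.
by rewrite (evs_addA evs).
Qed.

Lemma feasible_dep_Lset x y : feasible le add smul x -> feasible le add smul y ->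
  orderly_dependent le add smul x y -> Lset le add smul x y.
Proof. by move=> fx [ny _] [Lyx|//]; apply: Lset_feasible_sym fx ny Lyx. Qed.

Lemma feasible_dep_trans x y z :
  feasible le add smul x -> feasible le add smul y -> feasible le add smul z ->
  orderly_dependent le add smul x y -> orderly_dependent le add smul y z ->
  orderly_dependent le add smul x z.
Proof.
move=> Qx Qy Qz dxy dyz; right.
exact: Lset_trans (feasible_dep_Lset Qx Qy dxy) (feasible_dep_Lset Qy Qz dyz).
Qed.

Lemma basis_feasible B b : is_basis le add smul B -> B b -> feasible le add smul b.
Proof.
move=> [Bnp [Bind [_ genB]]] Bb; split=> [|w le_wb nw]; first exact: Bnp.
have [b' [Bb' Lb'w]] := (genB w).1 nw.
have [<- //|ne] := classic (b' = b).
by case: (Bind b' b Bb' Bb ne); right; apply: Lset_le le_wb.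
Qed.

Lemma generates_transfer (B C : X -> Prop) :
  (forall c, C c -> ~ prim le c) ->
  (forall b, B b -> exists2 c, C c & Lset le add smul c b) ->
  generates le add smul B -> generates le add smul C.
Proof.
move=> Cnp coverB [_ genB]; split=> // z; split.
- move=> /(genB z) [b [Bb Lbz]]; have [c Cc Lcb] := coverB b Bb.
  by exists c; split=> //; apply: Lset_trans Lbz.
- by move=> [c [Cc Lcz]]; apply: Lset_nonprim (Cnp c Cc) Lcz.
Qed.

End ExponentialVectorSpace.

Theorem mainTheorem5 (K : fieldType) (X : Type) (le : X -> X -> Prop)
  (add : X -> X -> X) (smul : K -> X -> X) (th : X) :
  is_evs le add smul th ->
  ((exists B : X -> Prop, is_basis le add smul B) <->
   generates le add smul (feasible le add smul)).
Proof.
move=> evs; split.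
- move=> [B basisB]; apply: (generates_transfer evs _ _ basisB.2.2) => [c [] //|b Bb].
  by exists b; [exact: (basis_feasible evs basisB Bb) | exact: (Lset_refl evs)].
- move=> genQ.
  have [|||R [RQ coverQ Rind]] := exists_transversal (S := feasible le add smul)
    (E := orderly_dependent le add smul) (inhabits th).
  + by move=> x _; right; exact: (Lset_refl evs).
  + by move=> x y [|]; [right|left].
  + by move=> x y z; apply: (feasible_dep_trans evs).
  have Rnp r : R r -> ~ prim le r by move/RQ => [].
  exists R; split=> //; split=> [r r' Rr Rr' ne /(Rind r r' Rr Rr')//|].
  apply: (generates_transfer evs Rnp _ genQ) => q Qq.
  have [r Rr drq] := coverQ q Qq.
  by exists r => //; exact: (feasible_dep_Lset evs (RQ r Rr) Qq drq).
Qed.
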